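(* For any finite simple graph $X$ and any $\pi\in S_X$, $\mathrm{Fix}(\mathbf{F}^\uparrow)=\mathrm{Fix}(\mathbf{F}^\downarrow)=\mathrm{Fix}(\mathbf{F}^\updownarrow)=\mathrm{Fix}(\mathbf{F}^\uparrow_\pi)=\mathrm{Fix}(\mathbf{F}^\downarrow_\pi)=\mathrm{Fix}(\mathbf{F}^\updownarrow_\pi)$, where $\mathrm{Fix}(\phi)$ denotes the set of fixed points of $\phi$.
   Context: Let $X$ be a finite simple graph with vertices $1,\dots,n$; $d(v)$ is the degree of $v$ and $n[v]$ the closed neighborhood of $v$. An extended vertex state is $s_v=(x_v,k_v)\in\{0,1\}\times\{1,\dots,d(v)+1\}$; $\mathcal{S}$ is the product of these sets. Let $\sigma(x[v])=|\{u\in n[v]:x_u=1\}|$. All vertex functions set $x_v'=1$ iff $\sigma(x[v])\ge k_v$ (else $0$). Increasing ($\uparrow$): $k_v'=k_v+1$ if $x_v=0$ and $\sigma(x[v])\ge k_v$, else $k_v$. Decreasing ($\downarrow$): $k_v'=k_v-1$ if $x_v=1$ and $\sigma(x[v])<k_v$, else $k_v$. Mixed ($\updownarrow$): both of these changes, $k_v$ unchanged otherwise. The local map $F^\star_v$ updates only coordinate $v$; for a permutation $\pi=(\pi_1,\dots,\pi_n)$, the SDS map is $\mathbf{F}^\star_\pi=F^\star_{\pi_n}\circ\cdots\circ F^\star_{\pi_1}$, and the GCA map $\mathbf{F}^\star$ applies the vertex function at all vertices simultaneously. *)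

From mathcomp Require Import all_boot all_order all_fingroup.
Set Implicit Arguments. Unset Strict Implicit. Unset Printing Implicit Defensive.

Definition simple_graph (n : nat) (e : rel 'I_n) : Prop :=
  irreflexive e /\ symmetric e.

Section SDS.
Variables (n : nat) (e : rel 'I_n).

Definition deg (v : 'I_n) : nat := #|[set u | e v u]|.
Definition cnbhd (v : 'I_n) : {set 'I_n} := [set u | (u == v) || e v u].

(* extended state: s v = (x_v, k_v) *)
Definition state := {ffun 'I_n -> bool * nat}.

Definition valid (s : state) : Prop :=
  forall v, 1 <= (s v).2 <= (deg v).+1.

Definition sigma (s : state) (v : 'I_n) : nat :=
  #|[set u in cnbhd v | (s u).1]|.

Inductive kind := Incr | Decr | Mixed.

Definition vfun (t : kind) (s : state) (v : 'I_n) : bool * nat :=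
  let x := (s v).1 in let k := (s v).2 in
  let sg := sigma s v in
  let x' := k <= sg in
  let k' :=
    match t with
    | Incr => if ~~ x && (k <= sg) then k.+1 else k
    | Decr => if x && (sg < k) then k.-1 else k
    | Mixed => if ~~ x && (k <= sg) then k.+1
               else if x && (sg < k) then k.-1 else k
    end in
  (x', k').

Definition Floc (t : kind) (v : 'I_n) (s : state) : state :=
  [ffun u => if u == v then vfun t s v else s u].

(* SDS map F_pi = F_{pi_n} o ... o F_{pi_1}, with pi_i = pi (i-1) *)
Definition SDS (t : kind) (pi : {perm 'I_n}) (s : state) : state :=
  foldl (fun acc i => Floc t (pi i) acc) s (enum 'I_n).

Definition GCA (t : kind) (s : state) : state := [ffun v => vfun t s v].

Definition Fix (phi : state -> state) : state -> Prop :=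
  fun s => valid s /\ phi s = s.

End SDS.

From mathcomp Require Import all_boot all_order all_fingroup.
From Corelib Require Import Setoid.

(* A vertex function fixes s at v exactly when the threshold test
   [k_v <= sigma(x[v])] already returns x_v; the update of k_v is then trivial
   for all three kinds, so the fixed points of every GCA map are the states
   passing all threshold tests.  For a sequential sweep, the first vertex whose
   test fails would be changed and never revisited, so a fixed point of the
   SDS map must pass every test as well.  Neither argument uses that the
   graph is simple. *)

Section FixedPoints.
Variables (n : nat) (e : rel 'I_n).

Definition threshold_stable (s : state n) : Prop :=
  forall v, ((s v).2 <= sigma e s v) = (s v).1.

Lemma vfun_fixedE t s v :
  (vfun e t s v == s v) = (((s v).2 <= sigma e s v) == (s v).1).
Proof.
rewrite /vfun; move: (sigma e s v) => sg; case: (s v) => [x k] /=.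
by case: t; case: x; case: (leqP k sg); rewrite !xpair_eqE /= ?eqxx ?andbT.
Qed.

Lemma vfun_fixedP t s :
  (forall v, vfun e t s v = s v) <-> threshold_stable s.
Proof.
split=> fix_s v; last by apply/eqP; rewrite vfun_fixedE fix_s.
by have /eqP := fix_s v; rewrite vfun_fixedE => /eqP.
Qed.

Lemma GCA_fixedP t s : GCA e t s = s <-> threshold_stable s.
Proof.
rewrite -(vfun_fixedP t); split=> [fix_s v | fix_s].
  by rewrite -{2}fix_s ffunE.
by apply/ffunP=> v; rewrite ffunE fix_s.
Qed.

Lemma Floc_id t v s : vfun e t s v = s v -> Floc e t v s = s.
Proof. by move=> fix_v; apply/ffunP=> u; rewrite ffunE; case: eqP => // ->. Qed.

Lemma sweep_notin t s l u : u \notin l ->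
  foldl (fun acc v => Floc e t v acc) s l u = s u.
Proof.
elim: l s => //= a l IHl s; rewrite in_cons negb_or => /andP[/negbTE ua ul].
by rewrite IHl // ffunE ua.
Qed.

Lemma sweep_fixedP t s l : uniq l ->
  foldl (fun acc v => Floc e t v acc) s l = s <->
  {in l, forall v, vfun e t s v = s v}.
Proof.
elim: l s => [|a l IHl] s /=; first by [].
case/andP=> al ul; split=> [fix_s | fix_l].
  have fix_a : vfun e t s a = s a by rewrite -{2}fix_s sweep_notin // ffunE eqxx.
  move: fix_s; rewrite Floc_id // => /(IHl _ ul) fix_l v.
  by rewrite in_cons => /predU1P[-> | /fix_l].
rewrite Floc_id ?fix_l ?mem_head //; apply/(IHl _ ul) => v lv.
by rewrite fix_l // in_cons lv orbT.
Qed.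

Lemma SDS_fixedP t (pi : {perm 'I_n}) s :
  SDS e t pi s = s <-> threshold_stable s.
Proof.
have -> : SDS e t pi s = foldl (fun acc v => Floc e t v acc) s (map pi (enum 'I_n)).
  by rewrite /SDS; elim: (enum 'I_n) s => //= a l IHl s; rewrite IHl.
have uniq_pi : uniq (map pi (enum 'I_n)).
  by rewrite (map_inj_uniq perm_inj) enum_uniq.
rewrite sweep_fixedP // -(vfun_fixedP t).
split=> [fix_l v | fix_s v _]; last exact: fix_s.
by apply: fix_l; rewrite -(permKV pi v) map_f ?mem_enum.
Qed.

Lemma Fix_GCA t s : Fix e (GCA e t) s <-> valid e s /\ threshold_stable s.
Proof. by rewrite /Fix GCA_fixedP. Qed.

Lemma Fix_SDS t pi s : Fix e (SDS e t pi) s <-> valid e s /\ threshold_stable s.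
Proof. by rewrite /Fix SDS_fixedP. Qed.

End FixedPoints.

Theorem proposition4p1 (n : nat) (e : rel 'I_n) (pi : {perm 'I_n}) :
  simple_graph e ->
  forall s : state n,
    (Fix e (GCA e Incr) s <-> Fix e (GCA e Decr) s) /\
    (Fix e (GCA e Decr) s <-> Fix e (GCA e Mixed) s) /\
    (Fix e (GCA e Mixed) s <-> Fix e (SDS e Incr pi) s) /\
    (Fix e (SDS e Incr pi) s <-> Fix e (SDS e Decr pi) s) /\
    (Fix e (SDS e Decr pi) s <-> Fix e (SDS e Mixed pi) s).
Proof. by move=> _ s; rewrite !Fix_GCA !Fix_SDS. Qed.
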